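(* Let $\Phi\in\mathcal{O}(M)$, $\epsilon_0>0$, $\mathbf{Y}^{(1)},\dots,\mathbf{Y}^{(S)}\in\mathbb{R}^{M\times N}$, and $\mathbf{P}_n=\Phi(\boldsymbol{\Sigma}_{n,S}+\epsilon_0\mathbf{I})\Phi^\intercal$ for $n=1,\dots,N$. Define $$[\mathbf{G}]_{ab}=\frac1N\sum_{n=1}^N\Big(\frac{[\mathbf{P}_n]_{ab}}{[\mathbf{P}_n]_{aa}}-\delta_{ab}\Big),\qquad[\boldsymbol{\Gamma}]_{ab}=\frac1N\sum_{n=1}^N\frac{[\mathbf{P}_n]_{bb}}{[\mathbf{P}_n]_{aa}},$$ and the tensor $[\tilde{\mathcal{H}}]_{abcd}=\delta_{ac}\delta_{bd}[\boldsymbol{\Gamma}]_{ab}+\delta_{ad}\delta_{bc}-2\delta_{abcd}$. Then the matrix $\mathbf{E}$ defined by $[\mathbf{E}]_{ab}=-[\mathbf{G}^{(\mathrm{anti})}]_{ab}/([\boldsymbol{\Gamma}^{(\mathrm{sym})}]_{ab}-1)$ if $[\boldsymbol{\Gamma}^{(\mathrm{sym})}]_{ab}\neq1$ and $[\mathbf{E}]_{ab}=0$ otherwise belongs to $\Upsilon$ and is a solution of $$\min_{\mathbf{E}\in\Upsilon}\ \langle\mathbf{G},\mathbf{E}\rangle+\tfrac12\langle\mathbf{E}|\tilde{\mathcal{H}}|\mathbf{E}\rangle.$$ Moreover, if $\mathbf{G}^{(\mathrm{anti})}\neq\mathbf{0}$ then $\langle\mathbf{G},\mathbf{E}\rangl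e<0$.
   Context: $\mathcal{O}(M)$ is the group of real $M\times M$ orthogonal matrices; $\Upsilon=\{\mathbf{E}\in\mathbb{R}^{M\times M}:\mathbf{E}^\intercal=-\mathbf{E}\}$. $\boldsymbol{\Sigma}_{n,S}=\frac1S\sum_{s=1}^S\mathbf{y}_n^{(s)}(\mathbf{y}_n^{(s)})^\intercal$, where $\mathbf{y}_n^{(s)}$ is the $n$-th column of $\mathbf{Y}^{(s)}$. $\delta_{ab}$ is the Kronecker delta and $\delta_{abcd}=1$ if $a=b=c=d$, $0$ otherwise. $\langle\mathbf{G},\mathbf{E}\rangle=\sum_{a,b}[\mathbf{G}]_{ab}[\mathbf{E}]_{ab}$, $\langle\mathbf{E}|\tilde{\mathcal{H}}|\mathbf{E}\rangle=\sum_{a,b,c,d}[\tilde{\mathcal{H}}]_{abcd}[\mathbf{E}]_{ab}[\mathbf{E}]_{cd}$. $\mathbf{G}^{(\mathrm{anti})}=(\mathbf{G}-\mathbf{G}^\intercal)/2$ and $\boldsymbol{\Gamma}^{(\mathrm{sym})}=(\boldsymbol{\Gamma}+\boldsymbol{\Gamma}^\intercal)/2$. *)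

From mathcomp Require Import all_boot all_order all_algebra.
Set Implicit Arguments. Unset Strict Implicit. Unset Printing Implicit Defensive.
Import Order.TTheory GRing.Theory Num.Theory.
Local Open Scope ring_scope.

Section Defs.
Variable R : realFieldType.

Definition kd {M : nat} (a b : 'I_M) : R := (a == b)%:R.
Definition kd4 {M : nat} (a b c d : 'I_M) : R :=
  [&& a == b, b == c & c == d]%:R.

Definition orthogonal_mx (M : nat) (Phi : 'M[R]_M) : Prop :=
  Phi^T *m Phi = 1%:M.

(* Upsilon: skew-symmetric matrices *)
Definition skew_mx (M : nat) (E : 'M[R]_M) : Prop := E^T = - E.

Definition Sigma_nS (M N S : nat) (Y : 'I_S -> 'M[R]_(M, N)) (n : 'I_N)
  : 'M[R]_M :=
  (S%:R)^-1 *: \sum_(s < S) (col n (Y s) *m (col n (Y s))^T).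

Definition Pn (M N S : nat) (Phi : 'M[R]_M) (eps0 : R)
  (Y : 'I_S -> 'M[R]_(M, N)) (n : 'I_N) : 'M[R]_M :=
  Phi *m (Sigma_nS Y n + eps0%:M) *m Phi^T.

Definition Gmx (M N : nat) (P : 'I_N -> 'M[R]_M) : 'M[R]_M :=
  \matrix_(a, b) ((N%:R)^-1 * \sum_(n < N) (P n a b / P n a a - kd a b)).

Definition Gammamx (M N : nat) (P : 'I_N -> 'M[R]_M) : 'M[R]_M :=
  \matrix_(a, b) ((N%:R)^-1 * \sum_(n < N) (P n b b / P n a a)).

Definition Htilde (M : nat) (Gamma : 'M[R]_M) (a b c d : 'I_M) : R :=
  kd a c * kd b d * Gamma a b + kd a d * kd b c - 2 * kd4 a b c d.

Definition anti_part (M : nat) (A : 'M[R]_M) : 'M[R]_M := (2%:R)^-1 *: (A - A^T).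
Definition sym_part (M : nat) (A : 'M[R]_M) : 'M[R]_M := (2%:R)^-1 *: (A + A^T).

Definition frob (M : nat) (A B : 'M[R]_M) : R := \sum_(a < M) \sum_(b < M) A a b * B a b.

Definition quad4 (M : nat) (H : 'I_M -> 'I_M -> 'I_M -> 'I_M -> R) (E : 'M[R]_M) : R :=
  \sum_(a < M) \sum_(b < M) \sum_(c < M) \sum_(d < M) H a b c d * E a b * E c d.

Definition objective (M : nat) (G Gamma E : 'M[R]_M) : R :=
  frob G E + (2%:R)^-1 * quad4 (Htilde Gamma) E.

Definition Esol (M : nat) (G Gamma : 'M[R]_M) : 'M[R]_M :=
  \matrix_(a, b) (if sym_part Gamma a b != 1
                  then - anti_part G a b / (sym_part Gamma a b - 1) else 0).

End Defs.

From mathcomp Require Import all_boot all_order all_algebra.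
From mathcomp Require Import ring lra.
Import Order.TTheory GRing.Theory Num.Theory.
Set Implicit Arguments. Unset Strict Implicit.
Local Open Scope ring_scope.

(* On skew-symmetric E the objective decouples into independent scalar
   quadratics  g e + (s - 1) e^2 / 2  in the entries e = E_ab, with
   g = G^(anti)_ab and s = Gamma^(sym)_ab.  Each s is an average of
   (x/y + y/x)/2 >= 1 over the diagonals x, y of the P_n, so s >= 1, and
   s = 1 forces equal diagonals, whence g = 0 by symmetry of P_n.  Every
   quadratic is thus minimised at e = -g/(s - 1), and then
   <G, E> = - sum g^2/(s - 1), which is negative as soon as some g != 0. *)

Section SkewQuadratic.
Variables (R : realFieldType) (M : nat).
Implicit Types (G Gamma E : 'M[R]_M).

Lemma sum_kd_mull (f : 'I_M -> R) (a : 'I_M) : \sum_c kd R a c * f c = f a.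
Proof.
rewrite (bigD1 a) //= big1 => [|c /negbTE ne]; first by rewrite /kd eqxx mul1r addr0.
by rewrite /kd eq_sym ne mul0r.
Qed.

Lemma skew_mxE E : skew_mx E -> forall a b, E b a = - E a b.
Proof. by move=> hE a b; have := congr1 (fun A : 'M[R]_M => A a b) hE; rewrite !mxE. Qed.

Lemma skew_mx_diag E : skew_mx E -> forall a, E a a = 0.
Proof. by move=> hE a; have := skew_mxE hE a a; lra. Qed.

Lemma Esol_skew G Gamma : skew_mx (Esol G Gamma).
Proof.
apply/matrixP => a b; rewrite !mxE (addrC (Gamma b a)).
case: ifP => _; last by rewrite oppr0.
by rewrite !mulNr opprK -mulNr; congr (_ * _); ring.
Qed.

Lemma frob_anti_part G E : skew_mx E -> frob G E = frob (anti_part G) E.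
Proof.
move=> hE; have hT : \sum_a \sum_b G b a * E a b = - frob G E.
  rewrite exchange_big -sumrN; apply: eq_bigr => a _; rewrite -sumrN.
  by apply: eq_bigr => b _; rewrite (skew_mxE hE) mulrN.
have -> : frob (anti_part G) E = 2^-1 * (frob G E - \sum_a \sum_b G b a * E a b).
  rewrite /frob -sumrB mulr_sumr; apply: eq_bigr => a _.
  rewrite -sumrB mulr_sumr; apply: eq_bigr => b _; rewrite !mxE; ring.
by rewrite hT opprK; field.
Qed.

Lemma sum_sym_part (A : 'M[R]_M) (F : 'I_M -> 'I_M -> R) :
    (forall a b, F b a = F a b) ->
  \sum_a \sum_b A a b * F a b = \sum_a \sum_b sym_part A a b * F a b.
Proof.
move=> hF; have hT : \sum_a \sum_b A b a * F a b = \sum_a \sum_b A a b * F a b.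
  by rewrite exchange_big; apply: eq_bigr => a _; apply: eq_bigr => b _; rewrite hF.
have -> : \sum_a \sum_b sym_part A a b * F a b =
    2^-1 * (\sum_a \sum_b A a b * F a b + \sum_a \sum_b A b a * F a b).
  rewrite -big_split /= mulr_sumr; apply: eq_bigr => a _.
  rewrite -big_split /= mulr_sumr; apply: eq_bigr => b _; rewrite !mxE; ring.
by rewrite hT; field.
Qed.

Lemma quad4_Htilde_skew Gamma E : skew_mx E ->
  quad4 (Htilde Gamma) E = \sum_a \sum_b (Gamma a b - 1) * E a b ^+ 2.
Proof.
move=> hE; rewrite /quad4; apply: eq_bigr => a _; apply: eq_bigr => b _.
have kd4_diag c d : kd4 R a b c d * E c d = 0.
  rewrite /kd4; case: (eqVneq c d) => [->|ne]; first by rewrite skew_mx_diag ?mulr0.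
  by rewrite !andbF mul0r.
transitivity (\sum_c \sum_d (kd R a c * (kd R b d * (Gamma a b * E a b * E c d))
                          + kd R b c * (kd R a d * (E a b * E c d)))).
  apply: eq_bigr => c _; apply: eq_bigr => d _.
  transitivity (kd R a c * (kd R b d * (Gamma a b * E a b * E c d))
     + kd R b c * (kd R a d * (E a b * E c d)) - 2 * E a b * (kd4 R a b c d * E c d)).
    by rewrite /Htilde; ring.
  by rewrite kd4_diag mulr0 subr0.
under eq_bigr do rewrite big_split /= -!mulr_sumr !sum_kd_mull.
by rewrite big_split /= !sum_kd_mull (skew_mxE hE); ring.
Qed.

Lemma objective_skew G Gamma E : skew_mx E -> objective G Gamma E =
  \sum_a \sum_b (anti_part G a b * E a b
                 + 2^-1 * ((sym_part Gamma a b - 1) * E a b ^+ 2)).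
Proof.
move=> hE; rewrite /objective frob_anti_part // quad4_Htilde_skew //.
have -> : \sum_a \sum_b (Gamma a b - 1) * E a b ^+ 2 =
    \sum_a \sum_b (sym_part Gamma a b - 1) * E a b ^+ 2.
  transitivity (\sum_a \sum_b (Gamma - const_mx 1) a b * E a b ^+ 2).
    by apply: eq_bigr => a _; apply: eq_bigr => b _; rewrite !mxE.
  rewrite sum_sym_part => [|a b]; last by rewrite (skew_mxE hE) sqrrN.
  by apply: eq_bigr => a _; apply: eq_bigr => b _; rewrite !mxE; field.
rewrite /frob mulr_sumr -big_split; apply: eq_bigr => a _.
by rewrite mulr_sumr -big_split.
Qed.
End SkewQuadratic.

Lemma quadratic_min (R : realFieldType) (c g x : R) : 0 < c ->
  g * (- g / c) + 2^-1 * (c * (- g / c) ^+ 2) <= g * x + 2^-1 * (c * x ^+ 2).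
Proof.
move=> c_gt0; rewrite -subr_ge0.
have -> : g * x + 2^-1 * (c * x ^+ 2) - (g * (- g / c) + 2^-1 * (c * (- g / c) ^+ 2))
    = 2^-1 * c * (x + g / c) ^+ 2.
  by field; rewrite gt_eqF.
by apply: mulr_ge0; [apply: mulr_ge0; [rewrite invr_ge0 ler0n | exact: ltW] | exact: sqr_ge0].
Qed.

Section EsolOptimal.
Variables (R : realFieldType) (M : nat) (G Gamma : 'M[R]_M).
Hypothesis sym_Gamma_ge1 : forall a b, 1 <= sym_part Gamma a b.
Hypothesis anti_G_eq0 : forall a b, sym_part Gamma a b = 1 -> anti_part G a b = 0.

Let E := Esol G Gamma.

Lemma Esol_minimizes E' : skew_mx E' -> objective G Gamma E <= objective G Gamma E'.
Proof.
move=> skE'; rewrite /E !objective_skew //; last exact: Esol_skew.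
apply: ler_sum => a _; apply: ler_sum => b _; rewrite [Esol _ _ _ _]mxE.
case: (eqVneq (sym_part Gamma a b) 1) => [s1 | s_ne1] /=.
  by rewrite anti_G_eq0 // s1 subrr !(mul0r, addr0).
by apply: quadratic_min; rewrite subr_gt0 lt_neqAle eq_sym s_ne1 sym_Gamma_ge1.
Qed.

Lemma anti_part_mul_Esol a b :
  anti_part G a b * E a b = - (anti_part G a b ^+ 2 / (sym_part Gamma a b - 1)).
Proof.
rewrite /E [Esol _ _ _ _]mxE; case: (eqVneq (sym_part Gamma a b) 1) => [s1 | _] /=.
  by rewrite anti_G_eq0 // expr0n !mul0r oppr0.
by rewrite mulNr mulrN mulrA -expr2.
Qed.

Lemma frob_Esol_lt0 : anti_part G != 0 -> frob G E < 0.
Proof.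
move=> nzG; rewrite frob_anti_part /E; last exact: Esol_skew.
have term_ge0 a b : 0 <= - (anti_part G a b * E a b).
  by rewrite anti_part_mul_Esol opprK divr_ge0 ?sqr_ge0 // subr_ge0.
have row_ge0 a : 0 <= \sum_b - (anti_part G a b * E a b).
  by apply: sumr_ge0 => b _; exact: term_ge0.
have term_eq0 a b : anti_part G a b * E a b = 0 -> anti_part G a b = 0.
  case: (eqVneq (sym_part Gamma a b) 1) => [/anti_G_eq0 // | s_ne1].
  rewrite anti_part_mul_Esol => /eqP; rewrite oppr_eq0 mulf_eq0 invr_eq0 subr_eq0.
  by rewrite (negbTE s_ne1) orbF sqrf_eq0 => /eqP.
have frob_le0 : frob (anti_part G) E <= 0.
  rewrite -oppr_ge0 /frob -sumrN; apply: sumr_ge0 => a _.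
  by rewrite -sumrN; exact: row_ge0.
rewrite lt_def frob_le0 andbT; apply: contra nzG => /eqP frob0.
apply/eqP/matrixP => a b; rewrite [RHS]mxE; apply: term_eq0; apply/eqP.
have sum0 : \sum_a \sum_b - (anti_part G a b * E a b) = 0.
  by under eq_bigr do rewrite sumrN; rewrite sumrN /frob in frob0 *; rewrite -frob0 oppr0.
have row0 := psumr_eq0P (fun a _ => row_ge0 a) sum0 (i := a) isT.
by rewrite -oppr_eq0 (psumr_eq0P (fun b _ => term_ge0 a b) row0 (i := b) isT).
Qed.
End EsolOptimal.

Lemma mean_ratio_sub1 (R : realFieldType) (x y : R) : 0 < x -> 0 < y ->
  2^-1 * (y / x + x / y) - 1 = (x - y) ^+ 2 / (2 * (x * y)).
Proof. by move=> x_gt0 y_gt0; field; rewrite !gt_eqF. Qed.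

Lemma mean_ratio_sub1_ge0 (R : realFieldType) (x y : R) : 0 < x -> 0 < y ->
  0 <= 2^-1 * (y / x + x / y) - 1.
Proof.
move=> x_gt0 y_gt0; rewrite mean_ratio_sub1 // divr_ge0 ?sqr_ge0 //.
by rewrite !mulr_ge0 ?ltW.
Qed.

Lemma mean_ratio_sub1_eq0 (R : realFieldType) (x y : R) : 0 < x -> 0 < y ->
  2^-1 * (y / x + x / y) - 1 = 0 -> x = y.
Proof.
move=> x_gt0 y_gt0; rewrite mean_ratio_sub1 // => /eqP.
rewrite mulf_eq0 sqrf_eq0 subr_eq0 invr_eq0 !mulf_eq0 pnatr_eq0.
rewrite (gt_eqF x_gt0) (gt_eqF y_gt0) /= !orbF.
by move/eqP.
Qed.

Section RatioMatrices.
Variables (R : realFieldType) (M N : nat) (P : 'I_N -> 'M[R]_M).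
Hypothesis N_gt0 : (0 < N)%N.
Hypothesis P_diag_gt0 : forall n a, 0 < P n a a.

Lemma sym_Gammamx_sub1 a b : sym_part (Gammamx P) a b - 1 =
  N%:R^-1 * \sum_n (2^-1 * (P n b b / P n a a + P n a a / P n b b) - 1).
Proof.
rewrite !mxE sumrB -mulr_sumr big_split /= sumr_const card_ord.
by field; rewrite pnatr_eq0 -lt0n.
Qed.

Lemma sym_Gammamx_ge1 a b : 1 <= sym_part (Gammamx P) a b.
Proof.
rewrite -subr_ge0 sym_Gammamx_sub1 mulr_ge0 ?invr_ge0 ?ler0n //.
by apply: sumr_ge0 => n _; exact: mean_ratio_sub1_ge0.
Qed.

Lemma sym_Gammamx_eq1 a b : sym_part (Gammamx P) a b = 1 ->
  forall n, P n a a = P n b b.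
Proof.
move=> /eqP; rewrite -subr_eq0 sym_Gammamx_sub1 mulf_eq0 invr_eq0 pnatr_eq0
  (gtn_eqF N_gt0) /= => /eqP sum0 n.
apply: mean_ratio_sub1_eq0 => //.
by apply: (psumr_eq0P _ sum0) => // m _; exact: mean_ratio_sub1_ge0.
Qed.

Lemma anti_Gmx_eq0 a b : (forall n, P n b a = P n a b) ->
  sym_part (Gammamx P) a b = 1 -> anti_part (Gmx P) a b = 0.
Proof.
move=> P_sym /sym_Gammamx_eq1 diag_eq; rewrite !mxE.
have -> : \sum_n (P n b a / P n b b - kd R b a) = \sum_n (P n a b / P n a a - kd R a b).
  by apply: eq_bigr => n _; rewrite P_sym diag_eq /kd eq_sym.
by rewrite subrr mulr0.
Qed.
End RatioMatrices.

Lemma outer_diag_ge0 (R : realFieldType) (M : nat) (u : 'cV[R]_M) a :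
  0 <= (u *m u^T) a a.
Proof. by rewrite mxE sumr_ge0 // => j _; rewrite mxE -expr2 sqr_ge0. Qed.

Section CovarianceMatrices.
Variables (R : realFieldType) (M N S : nat).
Variables (Phi : 'M[R]_M) (eps0 : R) (Y : 'I_S -> 'M[R]_(M, N)).
Hypothesis Phi_orth : orthogonal_mx Phi.
Hypothesis eps0_gt0 : 0 < eps0.

Lemma PnE n : Pn Phi eps0 Y n =
  S%:R^-1 *: \sum_s ((Phi *m col n (Y s)) *m (Phi *m col n (Y s))^T) + eps0%:M.
Proof.
rewrite /Pn mulmxDr mulmxDl; congr (_ + _).
  rewrite /Sigma_nS -scalemxAr -scalemxAl mulmx_sumr mulmx_suml; congr (_ *: _).
  by apply: eq_bigr => s _; rewrite trmx_mul !mulmxA.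
by rewrite mul_mx_scalar -scalemxAl (mulmx1C Phi_orth) scalemx1.
Qed.

Lemma Pn_sym n a b : Pn Phi eps0 Y n b a = Pn Phi eps0 Y n a b.
Proof.
have : (Pn Phi eps0 Y n)^T = Pn Phi eps0 Y n.
  rewrite PnE linearD /= linearZ /= tr_scalar_mx linear_sum /=.
  by congr (_ *: _ + _); apply: eq_bigr => s _; rewrite trmx_mul trmxK.
by move/(congr1 (fun A : 'M[R]_M => A a b)); rewrite mxE.
Qed.

Lemma Pn_diag_gt0 n a : 0 < Pn Phi eps0 Y n a a.
Proof.
rewrite PnE !mxE eqxx mulr1n summxE ltr_wpDl // mulr_ge0 ?invr_ge0 ?ler0n //.
by apply: sumr_ge0 => s _; exact: outer_diag_ge0.
Qed.
End CovarianceMatrices.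

Theorem proposition4 (R : realFieldType) (M N S : nat)
  (Phi : 'M[R]_M) (eps0 : R) (Y : 'I_S -> 'M[R]_(M, N)) :
  (0 < N)%N -> (0 < S)%N ->
  orthogonal_mx Phi -> 0 < eps0 ->
  let P := Pn Phi eps0 Y in
  let G := Gmx P in
  let Gamma := Gammamx P in
  let E := Esol G Gamma in
  [/\ skew_mx E,
      (forall E' : 'M[R]_M, skew_mx E' -> objective G Gamma E <= objective G Gamma E')
    & anti_part G != 0 -> frob G E < 0].
Proof.
move=> N_gt0 _ Phi_orth eps0_gt0 P G Gamma E.
have P_diag_gt0 n a : 0 < P n a a by exact: Pn_diag_gt0.
have Gamma_ge1 a b : 1 <= sym_part Gamma a b by exact: sym_Gammamx_ge1.
have G_eq0 a b : sym_part Gamma a b = 1 -> anti_part G a b = 0.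
  by apply: anti_Gmx_eq0 => // n; exact: Pn_sym.
split; first exact: Esol_skew.
  exact: Esol_minimizes.
exact: frob_Esol_lt0.
Qed.
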